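(* For $\mu=\sum_{i\in I}f_is_if_i$ and $\nu=\sum_{j\in J}g_jt_jg_j$ in $P(G,C(X))$, define $\mu\nu:=\sum_{i\in I}\sum_{j\in J}\big(f_i(s_i\cdot g_j)\big)(s_it_j)\big((s_i\cdot g_j)f_i\big)$. Then $\sum_{(i,j)\in I\times J}\big(f_i(s_i\cdot g_j)\big)^2=1$ as a norm-convergent unordered sum, so $\mu\nu\in P(G,C(X))$ (after discarding zero terms); this multiplication is associative, making $P(G,C(X))$ a semigroup, and $P_f(G,C(X))$ is a subsemigroup.
   Context: $G$ is a countable discrete group acting on a compact Hausdorff space $X$ by homeomorphisms, with $(g\cdot f)(x)=f(g^{-1}x)$ on $C(X)$. A generalized $(G,C(X))$-probability measure is a formal sum $\mu=\sum_{i\in I}f_is_if_i$ with $I$ an index set, $s_i\in G$ (repetitions allowed), $f_i\in C(X)$, $f_i\ge0$, $f_i\ne0$, $\sum_if_i^2=1$ as a norm-convergent unordered sum; $P(G,C(X))$ is the set of these and $P_f(G,C(X))$ the subset with $I$ finite. *)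

From HB Require Import structures.
From mathcomp Require Import all_boot all_order all_algebra.
From mathcomp Require Import finmap.
From mathcomp Require Import all_classical all_reals all_analysis.
Import numFieldNormedType.Exports.
Unset Printing Implicit Defensive.
Import Order.TTheory GRing.Theory Num.Theory.
Local Open Scope classical_set_scope.
Local Open Scope ring_scope.

(* A formal sum  \sum_{i in I} f_i s_i f_i : an index type I together with
   group elements s_i and functions f_i. *)
Record fsum (R : realType) (X : Type) (G : Type) := FSum {
  fs_idx : choiceType;
  fs_grp : fs_idx -> G;
  fs_fun : fs_idx -> X -> R }.
Arguments FSum {R X G} _ _ _.
Arguments fs_idx {R X G} _.
Arguments fs_grp {R X G} _ _.
Arguments fs_fun {R X G} _ _ _.

Definition gact {R : realType} {X G : Type} (ginv : G -> G) (act : G -> X -> X)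
  (g : G) (f : X -> R) : X -> R := fun x => f (act (ginv g) x).

(* sum_{i in I} a_i = l as a norm-convergent (sup norm) unordered sum:
   the net of finite partial sums converges to l in sup norm. *)
Definition unorm_sum_to {R : realType} {X : Type} {I : choiceType}
  (a : I -> X -> R) (l : X -> R) : Prop :=
  forall eps : R, 0 < eps -> exists F0 : {fset I}, forall F : {fset I},
    fsubset F0 F -> forall x : X, `| (\sum_(i <- F) a i x) - l x | <= eps.

Definition isP {R : realType} {X : topologicalType} {G : Type}
  (m : fsum R X G) : Prop :=
  [/\ forall i, continuous (fs_fun m i),
      forall i x, 0 <= fs_fun m i x,
      forall i, fs_fun m i <> (fun _ => 0)
    & unorm_sum_to (fun i x => fs_fun m i x ^+ 2) (fun _ => 1)].

Definition isPf {R : realType} {X : topologicalType} {G : Type}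
  (m : fsum R X G) : Prop :=
  isP m /\ finite_set [set: fs_idx m].

Definition prod_coef {R : realType} {X G : Type} (ginv : G -> G)
  (act : G -> X -> X) (m n : fsum R X G) (p : fs_idx m * fs_idx n) : X -> R :=
  fun x => fs_fun m p.1 x * gact ginv act (fs_grp m p.1) (fs_fun n p.2) x.

Definition prod_idx {R : realType} {X G : Type} (ginv : G -> G)
  (act : G -> X -> X) (m n : fsum R X G) : set (fs_idx m * fs_idx n) :=
  [set p | prod_coef ginv act m n p <> (fun _ => 0)].

Definition fs_mul {R : realType} {X G : Type} (gmul : G -> G -> G)
  (ginv : G -> G) (act : G -> X -> X) (m n : fsum R X G) : fsum R X G :=
  FSum (prod_idx ginv act m n : choiceType)
    (fun p => gmul (fs_grp m (val p).1) (fs_grp n (val p).2))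
    (fun p => prod_coef ginv act m n (val p)).

(* equality of formal sums: same terms up to a bijective reindexing *)
Definition fs_equiv {R : realType} {X G : Type} (m n : fsum R X G) : Prop :=
  exists e : fs_idx m -> fs_idx n, bijective e /\
    forall i, fs_grp n (e i) = fs_grp m i /\ fs_fun n (e i) = fs_fun m i.

From Pilot Require Import Defs.
From HB Require Import structures.
From mathcomp Require Import all_boot all_order all_algebra.
From mathcomp Require Import finmap.
From mathcomp Require Import all_classical all_reals all_analysis.
From mathcomp Require Import lra.
Import numFieldNormedType.Exports.
Import Order.TTheory GRing.Theory Num.Theory.
Local Open Scope classical_set_scope.
Local Open Scope ring_scope.

(* Its squared
   coefficients are a_i(x) b_j(phi_i(x)) with a_i = f_i^2, b_j = g_j^2 and
   phi_i = s_i^-1: the product of a partition of unity with translates of a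
   second one.  Such a product is again a norm-convergent partition of unity
   (unorm_sum_translates): a finite partial sum is at most 1 because every
   finite set of pairs lies in a rectangle A x B, and it is at least
   1 - e once it contains a rectangle A x B large enough for both factors.
   Dropping the vanishing terms does not change the sum (unorm_sum_restrict),
   which gives closure of P(G, C(X)) and, by finiteness of the index set,
   of P_f(G, C(X)).  Associativity is a reindexing: both triple products have
   the coefficients f_i (s_i . g_j) (s_i s_j . h_k) (coef3), and a triple is
   kept on one side iff it is kept on the other.  The product is compatible
   with the reindexing equivalence of formal sums, so P(G, C(X)) is a
   semigroup and P_f(G, C(X)) a subsemigroup. *)

Definition fsetX {I J : choiceType} (A : {fset I}) (B : {fset J}) :
  {fset I * J} :=
  [fset ((i, j) : I * J) | i in A, j in B]%fset.

Section FiniteSums.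
Context {R : numDomainType} {I J : choiceType}.

Lemma fsum_le_subset {A B : {fset I}} {F : I -> R} :
  fsubset A B -> (forall i, i \in B -> 0 <= F i) ->
  \sum_(i <- A) F i <= \sum_(i <- B) F i.
Proof.
move=> AB F0; pose FA i := if i \in A then F i else 0.
rewrite (eq_big_seq FA); last by move=> i iA; rewrite /FA iA.
rewrite (big_fset_incl _ AB); last by move=> i _ iA; rewrite /FA (negbTE iA).
rewrite big_seq [leRHS]big_seq; apply: ler_sum => i iB.
by rewrite /FA; case: ifP => // _; apply: F0.
Qed.

Lemma big_fsetX (A : {fset I}) (B : {fset J}) (F : I * J -> R) :
  \sum_(p <- fsetX A B) F p =
  \sum_(i <- A) \sum_(j <- B) F (i, j).
Proof. by rewrite big_imfset2 // => -[i j] [i' j'] _ _ [-> ->]. Qed.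

Lemma subset_fsetX (F : {fset I * J}) :
  fsubset F (fsetX [fset p.1 | p in F] [fset p.2 | p in F])%fset.
Proof.
apply/fsubsetP => -[i j] ijF.
apply/imfset2P; exists i; first by apply/imfsetP; exists (i, j).
by exists j => //; apply/imfsetP; exists (i, j).
Qed.
End FiniteSums.

Section UnorderedSums.
Context {R : realType} {X : Type}.

Lemma unorm_partial_le {I : choiceType} {a : I -> X -> R} {l : X -> R} :
  unorm_sum_to a l -> (forall i x, 0 <= a i x) ->
  forall (F : {fset I}) x, \sum_(i <- F) a i x <= l x.
Proof.
move=> al a0 F x; apply/ler_addgt0Pr => e e0.
have [F0 F0_ok] := al e e0.
have /ler_normlP[_ FF0_le] := F0_ok (F `|` F0)%fset (fsubsetUr _ _) x.
apply: le_trans (_ : \sum_(i <- (F `|` F0)%fset) a i x <= _).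
  by apply: fsum_le_subset => [|i _]; [exact: fsubsetUl | exact: a0].
by rewrite -lerBlDl.
Qed.

Lemma unorm_sum_translates (I J : choiceType) (a : I -> X -> R)
    (b : J -> X -> R) (phi : I -> X -> X) :
  (forall i x, 0 <= a i x) -> (forall j x, 0 <= b j x) ->
  unorm_sum_to a (fun _ => 1) -> unorm_sum_to b (fun _ => 1) ->
  unorm_sum_to (fun p x => a p.1 x * b p.2 (phi p.1 x)) (fun _ => 1).
Proof.
move=> a0 b0 a1 b1.
pose c (p : I * J) x := a p.1 x * b p.2 (phi p.1 x).
have c0 p x : 0 <= c p x by apply: mulr_ge0.
have rect (A : {fset I}) (B : {fset J}) x : \sum_(p <- fsetX A B) c p x =
    \sum_(i <- A) a i x * \sum_(j <- B) b j (phi i x).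
  by rewrite big_fsetX; apply: eq_bigr => i _; rewrite mulr_sumr.
have c_le1 (F : {fset I * J}) x : \sum_(p <- F) c p x <= 1.
  apply: le_trans (fsum_le_subset (subset_fsetX F) (fun p _ => c0 p x)) _.
  rewrite rect; apply: le_trans (unorm_partial_le a1 a0 _ x).
  apply: ler_sum => i _; apply: ler_piMr; first exact: a0.
  exact: (unorm_partial_le b1 b0).
move=> e e0; have e20 : 0 < e / 2 by rewrite divr_gt0.
have [A A_ok] := a1 _ e20; have [B B_ok] := b1 _ e20.
exists (fsetX A B) => F ABF x; apply/ler_normlP; split; last first.
  by have := c_le1 F x; lra.
have sA_le := unorm_partial_le a1 a0 A x.
have /ler_normlP[sA_ge _] := A_ok A (fsubset_refl _) x.
have rect_ge : (\sum_(i <- A) a i x) * (1 - e / 2) <= \sum_(p <- F) c p x.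
  apply: le_trans _ (fsum_le_subset ABF (fun p _ => c0 p x)).
  rewrite rect mulr_suml; apply: ler_sum => i _; apply: ler_wpM2l => //.
  by have /ler_normlP[sB_ge _] := B_ok B (fsubset_refl _) (phi i x); lra.
set sA := \sum_(i <- A) a i x in sA_le sA_ge rect_ge.
have : 1 - e <= sA * (1 - e / 2) by nra.
lra.
Qed.

Lemma unorm_sum_restrict (I : choiceType) (P : set I) (a : I -> X -> R) l :
  (forall i, ~ P i -> forall x, a i x = 0) ->
  unorm_sum_to a l -> unorm_sum_to (fun (p : P) x => a (val p) x) l.
Proof.
move=> a_out al e e0; have [F0 F0_ok] := al e e0.
exists [fset p in pmap insub F0]%fset => F F0F x.
have -> : \sum_(p <- F) a (val p) x =
          \sum_(i <- [fset val p | p in F]%fset) a i x.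
  by rewrite big_imfset //; apply: in2W; exact: val_inj.
rewrite (big_fset_incl _ (fsubsetUl _ F0)); first exact/F0_ok/fsubsetUr.
move=> i /fsetUP[iV|iF0] iF; first by rewrite iV in iF.
have [Pi|nPi] := pselect (P i); last exact: a_out.
case/negP: iF; apply/imfsetP; exists (SigSub (mem_set Pi)) => //.
by apply: (fsubsetP F0F); rewrite inE mem_pmap_sub.
Qed.
End UnorderedSums.

Section Products.
Variables (R : realType) (X : topologicalType) (G : Type).
Variables (gmul : G -> G -> G) (g1 : G) (ginv : G -> G).
Hypothesis gmulA : forall a b c, gmul a (gmul b c) = gmul (gmul a b) c.
Hypothesis gmul1 : forall a, gmul g1 a = a.
Hypothesis gmulV : forall a, gmul (ginv a) a = g1.
Variable act : G -> X -> X.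
Hypothesis actM : forall a b x, act (gmul a b) x = act a (act b x).

Local Notation M := (fs_mul gmul ginv act).
Local Notation coef := (prod_coef ginv act).
Local Notation gact := (gact ginv act).

Lemma gmulVr a : gmul a (ginv a) = g1.
Proof.
rewrite -[LHS]gmul1 -{1}(gmulV (ginv a)) -gmulA (gmulA (ginv a) a) gmulV gmul1.
exact: gmulV.
Qed.

Lemma gmul1r a : gmul a g1 = a.
Proof. by rewrite -(gmulV a) gmulA gmulVr gmul1. Qed.

Lemma ginvM a b : ginv (gmul a b) = gmul (ginv b) (ginv a).
Proof.
have prod_inv : gmul (gmul a b) (gmul (ginv b) (ginv a)) = g1.
  by rewrite -gmulA (gmulA b) gmulVr gmul1 gmulVr.
by rewrite -[LHS]gmul1r -prod_inv gmulA gmulV gmul1.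
Qed.

Lemma gactM a b (f : X -> R) : gact (gmul a b) f = gact a (gact b f).
Proof. by apply/funext => x; rewrite /Defs.gact ginvM actM. Qed.

Section Assoc.
Variables m n r : fsum R X G.

Definition coef3 i j k : X -> R :=
  fun x => coef m n (i, j) x *
            gact (gmul (fs_grp m i) (fs_grp n j)) (fs_fun r k) x.

Lemma coef3_left (p : fs_idx (M m n)) k :
  coef (M m n) r (p, k) = coef3 (val p).1 (val p).2 k.
Proof. by []. Qed.

Lemma coef3E i j k :
  coef3 i j k = fun x => fs_fun m i x * gact (fs_grp m i) (coef n r (j, k)) x.
Proof. by apply/funext => x; rewrite /coef3 gactM /prod_coef -mulrA. Qed.

Lemma coef3_right i (q : fs_idx (M n r)) :
  coef m (M n r) (i, q) = coef3 i (val q).1 (val q).2.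
Proof. by rewrite coef3E. Qed.

(* A nonzero triple coefficient has nonzero partial products on both sides,
   so the kept triples on the two sides correspond. *)
Lemma coef3_nz_left i j k :
  coef3 i j k <> (fun=> 0) -> coef m n (i, j) <> (fun=> 0).
Proof.
by move=> nz3 z; apply: nz3; apply/funext => x; rewrite /coef3 z mul0r.
Qed.

Lemma coef3_nz_right i j k :
  coef3 i j k <> (fun=> 0) -> coef n r (j, k) <> (fun=> 0).
Proof.
by move=> nz3 z; apply: nz3; rewrite coef3E z; apply/funext => x; rewrite mulr0.
Qed.

Lemma assoc_fwd_nz (q : fs_idx (M (M m n) r)) :
  coef3 (val (val q).1).1 (val (val q).1).2 (val q).2 <> (fun=> 0).
Proof. by rewrite -coef3_left; exact: set_mem (valP q). Qed.

Lemma assoc_fwd_inner_mem (q : fs_idx (M (M m n) r)) :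
  ((val (val q).1).2, (val q).2) \in prod_idx ginv act n r.
Proof. by apply/mem_set; exact: coef3_nz_right (assoc_fwd_nz q). Qed.

Definition assoc_fwd_inner q : fs_idx (M n r) := SigSub (assoc_fwd_inner_mem q).

Lemma assoc_fwd_mem (q : fs_idx (M (M m n) r)) :
  ((val (val q).1).1, assoc_fwd_inner q) \in prod_idx ginv act m (M n r).
Proof.
by apply/mem_set; rewrite /prod_idx /= coef3_right; exact: assoc_fwd_nz.
Qed.

Definition assoc_fwd q : fs_idx (M m (M n r)) := SigSub (assoc_fwd_mem q).

Lemma assoc_bwd_nz (q : fs_idx (M m (M n r))) :
  coef3 (val q).1 (val (val q).2).1 (val (val q).2).2 <> (fun=> 0).
Proof. by rewrite -coef3_right; exact: set_mem (valP q). Qed.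

Lemma assoc_bwd_inner_mem (q : fs_idx (M m (M n r))) :
  ((val q).1, (val (val q).2).1) \in prod_idx ginv act m n.
Proof. by apply/mem_set; exact: coef3_nz_left (assoc_bwd_nz q). Qed.

Definition assoc_bwd_inner q : fs_idx (M m n) := SigSub (assoc_bwd_inner_mem q).

Lemma assoc_bwd_mem (q : fs_idx (M m (M n r))) :
  (assoc_bwd_inner q, (val (val q).2).2) \in prod_idx ginv act (M m n) r.
Proof.
by apply/mem_set; rewrite /prod_idx /= coef3_left; exact: assoc_bwd_nz.
Qed.

Definition assoc_bwd q : fs_idx (M (M m n) r) := SigSub (assoc_bwd_mem q).

Lemma assoc_equiv : fs_equiv (M (M m n) r) (M m (M n r)).
Proof.
exists assoc_fwd; split.
  exists assoc_bwd.
    by case=> [[[[i j] ij] k] ijk]; apply: val_inj; congr pair; apply: val_inj.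
  by case=> [[i [[j k] jk]] ijk]; apply: val_inj; congr pair; apply: val_inj.
by move=> q; rewrite /= gmulA coef3_right.
Qed.
End Assoc.

Lemma mul_equiv (m m' n n' : fsum R X G) :
  fs_equiv m m' -> fs_equiv n n' -> fs_equiv (M m n) (M m' n').
Proof.
move=> [e [[e' eK e'K] e_ok]] [d [[d' dK d'K] d_ok]].
have coefE i j : coef m' n' (e i, d j) = coef m n (i, j).
  by rewrite /prod_coef /=; have [-> ->] := e_ok i; have [_ ->] := d_ok j.
have fwd_mem (q : fs_idx (M m n)) :
    (e (val q).1, d (val q).2) \in prod_idx ginv act m' n'.
  by apply/mem_set; rewrite /prod_idx /= coefE; exact: set_mem (valP q).
have bwd_mem (q : fs_idx (M m' n')) :
    (e' (val q).1, d' (val q).2) \in prod_idx ginv act m n.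
  apply/mem_set; rewrite /prod_idx /= -coefE e'K d'K; exact: set_mem (valP q).
exists (fun q => SigSub (fwd_mem q)); split.
  by exists (fun q => SigSub (bwd_mem q)) => -[[i j] ij]; apply: val_inj;
    rewrite /= ?eK ?dK ?e'K ?d'K.
case=> [[i j] ij]; split; last exact: coefE.
by rewrite /=; have [-> _] := e_ok i; have [-> _] := d_ok j.
Qed.

Hypothesis act_cont : forall a, continuous (act a).

Lemma mul_isP {m n : fsum R X G} : isP m -> isP n ->
  unorm_sum_to (fun p x => coef m n p x ^+ 2) (fun _ => 1) /\ isP (M m n).
Proof.
move=> [m_cont m_ge0 _ m_sum] [n_cont n_ge0 _ n_sum].
have coef_sq : unorm_sum_to (fun p x => coef m n p x ^+ 2) (fun _ => 1).
  have -> : (fun p x => coef m n p x ^+ 2) = (fun p x => fs_fun m p.1 x ^+ 2 *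
      fs_fun n p.2 (act (ginv (fs_grp m p.1)) x) ^+ 2).
    by apply/funext => p; apply/funext => x; rewrite /prod_coef exprMn.
  apply: (unorm_sum_translates _ _ (fun i x => fs_fun m i x ^+ 2)
    (fun j x => fs_fun n j x ^+ 2) (fun i => act (ginv (fs_grp m i))))
    => // *; exact: sqr_ge0.
split => //; split.
- move=> p x; apply: continuousM; first exact: m_cont.
  by apply: continuous_comp; [exact: act_cont | exact: n_cont].
- by move=> p x; apply: mulr_ge0; [exact: m_ge0 | exact: n_ge0].
- by move=> p; exact: set_mem (valP p).
- apply: (unorm_sum_restrict _ _ (fun p x => coef m n p x ^+ 2)) => // p p0 x.
  have -> : coef m n p = (fun=> 0) by apply: contrapT.
  by rewrite expr0n.
Qed.

Lemma mul_isPf (m n : fsum R X G) : isPf m -> isPf n -> isPf (M m n).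
Proof.
move=> [m_P m_fin] [n_P n_fin]; split; first exact: (mul_isP m_P n_P).2.
have := @finite_preimage _ _ [set: fs_idx m * fs_idx n]
  (val : fs_idx (M m n) -> _) _ _.
rewrite preimage_setT; apply; first by move=> p q _ _; exact: val_inj.
by rewrite -setXTT; exact: finite_setX.
Qed.

End Products.

Theorem mainTheorem8
  (R : realType)
  (X : topologicalType) (X_compact : compact [set: X]) (X_hausdorff : hausdorff_space X)
  (G : countType) (gmul : G -> G -> G) (g1 : G) (ginv : G -> G)
  (gmulA : forall a b c, gmul a (gmul b c) = gmul (gmul a b) c)
  (gmul1 : forall a, gmul g1 a = a)
  (gmulV : forall a, gmul (ginv a) a = g1)
  (act : G -> X -> X)
  (act1 : forall x, act g1 x = x)
  (actM : forall a b x, act (gmul a b) x = act a (act b x))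
  (act_cont : forall a, continuous (act a)) :
  (forall mu nu : fsum R X G, isP mu -> isP nu ->
     unorm_sum_to (fun p x => prod_coef ginv act mu nu p x ^+ 2)
                  (fun _ => 1)
     /\ isP (fs_mul gmul ginv act mu nu))
  /\ (forall mu nu rho : fsum R X G, isP mu -> isP nu -> isP rho ->
       fs_equiv (fs_mul gmul ginv act (fs_mul gmul ginv act mu nu) rho)
                (fs_mul gmul ginv act mu (fs_mul gmul ginv act nu rho)))
  /\ (forall mu mu' nu nu' : fsum R X G, isP mu -> isP mu' -> isP nu -> isP nu' ->
       fs_equiv mu mu' -> fs_equiv nu nu' ->
       fs_equiv (fs_mul gmul ginv act mu nu) (fs_mul gmul ginv act mu' nu'))
  /\ (forall mu nu : fsum R X G, isPf mu -> isPf nu ->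
       isPf (fs_mul gmul ginv act mu nu)).
Proof.
split; [|split; [|split]].
- by move=> mu nu; apply: mul_isP.
- by move=> mu nu rho _ _ _; apply: assoc_equiv.
- by move=> mu mu' nu nu' _ _ _ _; apply: mul_equiv.
- by move=> mu nu; apply: mul_isPf.
Qed.
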